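(* Every $\sigma$-scattered metrizable space is a $\Delta$-space.
   Context: A space is $\sigma$-scattered if it is a countable union of scattered subspaces (a space is scattered if every nonempty subset has a point isolated in that subset). A topological space $X$ is a $\Delta$-space if for every decreasing sequence $\{D_n:n\in\omega\}$ of subsets of $X$ with $\bigcap_n D_n=\emptyset$ there is a decreasing sequence $\{V_n:n\in\omega\}$ of open subsets of $X$ with $D_n\subseteq V_n$ for all $n$ and $\bigcap_n V_n=\emptyset$. *)

From mathcomp Require Import all_boot all_order all_algebra.
From mathcomp Require Import all_classical all_reals all_analysis.
From mathcomp Require Import Rstruct Rstruct_topology.
Set Implicit Arguments. Unset Strict Implicit. Unset Printing Implicit Defensive.
Import Order.TTheory GRing.Theory Num.Theory.
Local Open Scope classical_set_scope.
Local Open Scope ring_scope.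

Definition isolated_in {T : topologicalType} (B : set T) (x : T) : Prop :=
  B x /\ exists U : set T, open U /\ U `&` B = [set x].

Definition scattered {T : topologicalType} (S : set T) : Prop :=
  forall B : set T, B `<=` S -> B !=set0 -> exists x, isolated_in B x.

Definition sigma_scattered (T : topologicalType) : Prop :=
  exists S : nat -> set T, (forall n, scattered (S n)) /\ \bigcup_n S n = setT.

Definition metrizable (T : topologicalType) : Prop :=
  exists d : T -> T -> Rdefinitions.R,
    [/\ forall x y, d x y = 0 <-> x = y,
        forall x y, d x y = d y x,
        forall x y z, d x z <= d x y + d y z &
        forall A : set T, open A <->
          (forall x, A x -> exists2 e : Rdefinitions.R, 0 < e &
              [set y | d x y < e] `<=` A)].

Definition Delta_space (T : topologicalType) : Prop :=
  forall D : nat -> set T,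
    (forall n, D n.+1 `<=` D n) -> \bigcap_n D n = set0 ->
    exists V : nat -> set T,
      [/\ forall n, open (V n), forall n, V n.+1 `<=` V n,
          forall n, D n `<=` V n & \bigcap_n V n = set0].

From mathcomp Require Import all_boot all_order all_algebra.
From mathcomp Require Import all_classical all_reals all_analysis.
From mathcomp Require Import Rstruct Rstruct_topology.
From mathcomp Require Import lra.
Set Implicit Arguments. Unset Strict Implicit. Unset Printing Implicit Defensive.
Import Order.TTheory GRing.Theory Num.Theory.
Local Open Scope classical_set_scope.
Local Open Scope ring_scope.

(* The proof has three independent parts.
   1. (Topology) A space that is the union of an increasing sequence of closed
      discrete sets F_n is a Delta-space: given D_n decreasing with empty
      intersection, fix for every x an open W_n(x) meeting F_n at most in x,
      and let V_n be the union of the W_j(x) for j >= n and x in D_j.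
   2. (Topology) In a scattered set S one can attach to each x in S an open
      U_x containing x such that U_x containing y and U_y containing x forces
      x = y.  This comes from the Cantor-Bendixson tower of S (the least
      family of subsets of S closed under removing isolated points and under
      intersections), which is a chain: x is isolated in the least member of
      the tower containing it, and U_x witnesses this.
   3. (Metric) For such S and U, the layer L_n of points x of S whose
      1/(n+1)-ball lies in U_x is 1/(n+1)-separated, hence closed discrete;
      the layers increase with n and exhaust S.
   Covering T by the scattered sets S_k, the sets F_n, union over k <= n of
   the n-th layers L_{k,n} of S_k, are closed discrete, increase and cover T,
   so part 1 applies. *)

Definition closed_discrete {T : topologicalType} (F : set T) : Prop :=
  forall z : T, exists U : set T, [/\ open U, U z & U `&` F `<=` [set z]].

Section ClosedDiscrete.
Context {T : topologicalType}.

Lemma closed_discrete_bigcup_le (A : nat -> set T) (m : nat) :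
  (forall k, closed_discrete (A k)) ->
  closed_discrete [set x | exists2 k, (k <= m)%N & A k x].
Proof.
move=> cdA; elim: m => [|m IHm] z.
  have [U [oU Uz UA]] := cdA 0%N z; exists U; split => // y [Uy [k]].
  by rewrite leqn0 => /eqP -> Ay; apply: UA.
have [U1 [oU1 U1z U1A]] := IHm z; have [U2 [oU2 U2z U2A]] := cdA m.+1 z.
exists (U1 `&` U2); split => //; first exact: openI.
move=> y [[U1y U2y] [k]]; rewrite leq_eqVlt => /orP[/eqP -> Ay|km Ay].
  exact: U2A.
by apply: U1A; split => //; exists k.
Qed.

Lemma increasing_closed_discrete_Delta (F : nat -> set T) :
  (forall n, F n `<=` F n.+1) -> \bigcup_n F n = setT ->
  (forall n, closed_discrete (F n)) -> Delta_space T.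
Proof.
move=> Fincr Fcover cdF D Ddecr Dcap.
have [W HW] := choice (fun nz : nat * T => cdF nz.1 nz.2).
have Fmono : {homo F : i j / (i <= j)%N >-> i `<=` j}.
  exact: (homo_leq (@subset_refl T) (fun B A C => @subset_trans T B A C) Fincr).
have Dmono : {homo D : i j / (i <= j)%N >-> j `<=` i}.
  exact: (homo_leq (r := fun A B => B `<=` A) (@subset_refl T)
    (fun B A C AB BC => subset_trans BC AB) Ddecr).
pose V n := \bigcup_(j in [set j | (n <= j)%N]) \bigcup_(x in D j) W (j, x).
exists V; split.
- move=> n; apply: bigcup_open => j _; apply: bigcup_open => x _.
  by have [] := HW (j, x).
- move=> n y [j /= nj Wy]; exists j => //; exact: ltnW.
- move=> n x Dx; exists n; first exact: leqnn.
  by exists x => //; have [] := HW (n, x).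
- rewrite -subset0 => y Vy.
  have [n0 _ Fy] : (\bigcup_n F n) y by rewrite Fcover.
  have [m _ nDy] : (\bigcup_n ~` D n) y by rewrite -setC_bigcap Dcap setC0.
  have [j /= jmax [x Dx Wy]] := Vy (maxn n0 m) I.
  have [_ _ WF] := HW (j, x).
  have yx : y = x.
    by apply: WF; split => //; apply: Fmono Fy; exact: leq_trans (leq_maxl _ _) jmax.
  by apply: nDy; apply: (Dmono m j); [exact: leq_trans (leq_maxr _ _) jmax|rewrite yx].
Qed.

End ClosedDiscrete.

Section CantorBendixson.
Context {T : topologicalType} (S : set T).

Definition strip (F : set T) : set T := [set x | F x /\ ~ isolated_in F x].

(* Intersection of a family of subsets, taken inside S (so it is S when the
   family is empty). *)
Definition meetS (G : set (set T)) : set T := [set z | S z /\ forall F, G F -> F z].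

Definition tower_closed (Fam : set (set T)) : Prop :=
  (forall F, Fam F -> Fam (strip F)) /\ (forall G, G `<=` Fam -> Fam (meetS G)).

Definition tower : set (set T) := fun F => forall Fam, tower_closed Fam -> Fam F.

Lemma strip_sub (F : set T) : strip F `<=` F.
Proof. by move=> x []. Qed.

Lemma tower_is_closed : tower_closed tower.
Proof.
split=> [F towF Fam cFam|G Gtow Fam cFam]; first by apply: cFam.1; exact: towF.
by apply: cFam.2 => F /Gtow; apply.
Qed.

Lemma tower_strip (F : set T) : tower F -> tower (strip F).
Proof. exact: tower_is_closed.1. Qed.

Lemma tower_meetS (G : set (set T)) : G `<=` tower -> tower (meetS G).
Proof. exact: tower_is_closed.2. Qed.

Lemma tower_ind (P : set T -> Prop) :
  (forall F, tower F -> P F -> P (strip F)) ->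
  (forall G, G `<=` tower -> (forall F, G F -> P F) -> P (meetS G)) ->
  forall F, tower F -> P F.
Proof.
move=> Pstrip Pmeet F towF.
suff [] : [set F | tower F /\ P F] F by [].
apply: towF; split=> [A [towA PA]|G GP].
  by split; [exact: tower_strip|exact: Pstrip].
split; first by apply: tower_meetS => A /GP [].
by apply: Pmeet => A /GP [].
Qed.

Lemma tower_subS : forall F, tower F -> F `<=` S.
Proof. by apply: tower_ind => [A _ AS x /strip_sub /AS|G _ _ x []]. Qed.

(* C is extreme when every tower member F strictly containing C satisfies
   C `<=` strip F; this is the auxiliary notion of the classical proof that
   a tower is a chain. *)
Definition extreme (C : set T) : Prop :=
  forall F, tower F -> C `<=` F -> F <> C -> C `<=` strip F.

Lemma extreme_comparable (C F : set T) : tower C -> extreme C ->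
  tower F -> C `<=` F \/ F `<=` strip C.
Proof.
move=> towC extC; move: F; apply: tower_ind => [F towF [CF|FC]|G Gtow GP].
- have [->|FneC] := pselect (F = C); first by right.
  by left; exact: extC.
- by right=> x /strip_sub /FC.
- have [[F [GF FC]]|noF] := pselect (exists F, G F /\ F `<=` strip C).
    by right=> x [_ Gx]; apply: FC; exact: Gx.
  left=> x Cx; split; first exact: tower_subS towC _ Cx.
  move=> F GF; have [CF|FC] := GP F GF; first exact: CF.
  by exfalso; apply: noF; exists F.
Qed.

Lemma tower_extreme : forall C, tower C -> extreme C.
Proof.
apply: tower_ind => [C towC extC|G Gtow Gext] F towF sub neq.
- have [CF|Fsub] := extreme_comparable towC extC towF.
    have [-> //|FneC] := pselect (F = C).
    by move=> x /strip_sub; exact: extC.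
  by exfalso; apply: neq; rewrite eqEsubset.
- have [[C [GC notFC]]|noC] := pselect (exists C, G C /\ ~ F `<=` C).
    have [CF|FC] := extreme_comparable (Gtow C GC) (Gext C GC) towF.
      have FneC : F <> C by move=> FC; apply: notFC; rewrite FC.
      by move=> x [_ Gx]; apply: (Gext C GC F towF CF FneC); exact: Gx.
    by exfalso; apply: notFC => x /FC /strip_sub.
  exfalso; apply: neq; rewrite eqEsubset; split => // x Fx.
  split; first exact: tower_subS towF _ Fx.
  by move=> C GC; apply: contrapT => nCx; apply: noC; exists C; split=> // /(_ x Fx).
Qed.

Lemma tower_chain (F C : set T) : tower F -> tower C -> C `<=` F \/ F `<=` C.
Proof.
move=> towF towC.
have [CF|FC] := extreme_comparable towC (tower_extreme towC) towF; first by left.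
by right=> x /FC /strip_sub.
Qed.

Definition least_member (x : T) : set T := meetS [set F | tower F /\ F x].

Lemma least_member_tower (x : T) : tower (least_member x).
Proof. by apply: tower_meetS => F []. Qed.

Lemma least_member_self (x : T) : S x -> least_member x x.
Proof. by move=> Sx; split=> // F []. Qed.

(* In a scattered S, x is isolated in the least member containing it:
   otherwise that member would be contained in its own strip, hence have no
   isolated point at all. *)
Lemma least_member_isolated (x : T) :
  scattered S -> S x -> isolated_in (least_member x) x.
Proof.
move=> scS Sx; apply: contrapT => notiso.
have stripx : strip (least_member x) x by split; [exact: least_member_self|].
have noiso : least_member x `<=` strip (least_member x).
  move=> z [_ Lz]; apply: Lz; split => //; exact: tower_strip (least_member_tower x).
have [y isoy] := scS (least_member x) (tower_subS (least_member_tower x))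
  (ex_intro _ x (least_member_self Sx)).
by have [_] := noiso y isoy.1.
Qed.

End CantorBendixson.

(* Part 2: a scattered set S admits open neighbourhoods U x of its points
   such that two distinct points of S never lie in each other's
   neighbourhoods; U x isolates x in its least tower member, and the tower
   is a chain. *)
Lemma scattered_separating_nbhds {T : topologicalType} (S : set T) :
  scattered S -> exists U : T -> set T,
    (forall x, S x -> open (U x) /\ U x x) /\
    (forall x y, S x -> S y -> U x y -> U y x -> x = y).
Proof.
move=> scS.
have /choice[U HU] : forall x, exists Ux : set T, S x ->
    open Ux /\ Ux `&` least_member S x = [set x].
  move=> x; have [Sx|nSx] := pselect (S x); last by exists set0 => /nSx.
  by have [_ [U [oU UL]]] := least_member_isolated scS Sx; exists U.
exists U; split=> [x Sx|x y Sx Sy Uxy Uyx].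
  have [oU UL] := HU x Sx; split => //.
  by have [] : (U x `&` least_member S x) x by rewrite UL.
have [Lyx|Lxy] :=
  tower_chain (least_member_tower (S := S) x) (least_member_tower (S := S) y).
  have : (U x `&` least_member S x) y by split => //; exact/Lyx/least_member_self.
  by rewrite (HU x Sx).2.
have : (U y `&` least_member S y) x by split => //; exact/Lxy/least_member_self.
by rewrite (HU y Sy).2.
Qed.

Section Metric.
Variable T : topologicalType.
Variable d : T -> T -> Rdefinitions.R.
Hypothesis d0 : forall x y, d x y = 0 <-> x = y.
Hypothesis dsym : forall x y, d x y = d y x.
Hypothesis dtri : forall x y z, d x z <= d x y + d y z.
Hypothesis dopen : forall A : set T, open A <->
  (forall x, A x -> exists2 e : Rdefinitions.R, 0 < e & [set y | d x y < e] `<=` A).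

Lemma dist_refl (x : T) : d x x = 0.
Proof. exact/d0. Qed.

Lemma dist_gt0 (x y : T) : x <> y -> 0 < d x y.
Proof.
move=> neq; have := dtri x y x; rewrite dist_refl (dsym y x) => h.
by rewrite lt0r; apply/andP; split; [apply/eqP => /d0|lra].
Qed.

Lemma ball_open (z : T) (r : Rdefinitions.R) : open [set y | d z y < r].
Proof.
apply/dopen => y /= dzy; exists (r - d z y); first by rewrite subr_gt0.
by move=> w /= dyw; have := dtri z y w; lra.
Qed.

(* A del-separated set is closed discrete: a ball of radius del/2 contains
   at most one of its points, and a smaller ball then avoids that point
   unless it is the centre. *)
Lemma separated_closed_discrete (E : set T) (del : Rdefinitions.R) : 0 < del ->
  (forall x y, E x -> E y -> d x y < del -> x = y) -> closed_discrete E.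
Proof.
move=> del0 sepE z.
have [[e [Ee [dze nez]]]|far] :=
  pselect (exists e, E e /\ d z e < del / 2 /\ e <> z).
- exists [set y | d z y < d z e]; split; first exact: ball_open.
    by rewrite /= dist_refl; apply: dist_gt0 => /esym.
  move=> y [/= dzy Ey]; have ye : y = e.
    by apply: sepE => //; have := dtri y z e; rewrite (dsym y z); lra.
  by move: dzy; rewrite ye ltxx.
- exists [set y | d z y < del / 2]; split; first exact: ball_open.
    by rewrite /= dist_refl; lra.
  by move=> y [/= dzy Ey]; apply: contrapT => yz; apply: far; exists y.
Qed.

Definition layer (S : set T) (U : T -> set T) (n : nat) : set T :=
  [set x | S x /\ [set y | d x y < n.+1%:R^-1] `<=` U x].

Lemma layer_mono (S : set T) (U : T -> set T) (m n : nat) :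
  (m <= n)%N -> layer S U m `<=` layer S U n.
Proof.
move=> mn x [Sx ballU]; split => // y /= dxy; apply: ballU => /=.
by apply: lt_le_trans dxy _; rewrite lef_pV2 ?posrE ?ltr0Sn // ler_nat.
Qed.

Lemma layer_separated (S : set T) (U : T -> set T) (n : nat) :
  (forall x y, S x -> S y -> U x y -> U y x -> x = y) ->
  forall x y, layer S U n x -> layer S U n y -> d x y < n.+1%:R^-1 -> x = y.
Proof.
move=> sepU x y [Sx ballx] [Sy bally] dxy.
by apply: sepU => //; [exact: ballx|apply: bally; rewrite /= dsym].
Qed.

Lemma layer_exhaust (S : set T) (U : T -> set T) (x : T) :
  (forall x, S x -> open (U x) /\ U x x) -> S x -> exists n, layer S U n x.
Proof.
move=> nbhdU Sx; have [oU Ux] := nbhdU x Sx.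
have [e e0 ballU] := (dopen (U x)).1 oU x Ux.
have [N _ HN] := near_infty_natSinv_lt (PosNum e0).
exists N; split => // y /= dxy; apply: ballU => /=.
exact: lt_trans dxy (HN N (leqnn N)).
Qed.

Lemma sigma_scattered_metric_Delta (S : nat -> set T) :
  (forall k, scattered (S k)) -> \bigcup_k S k = setT -> Delta_space T.
Proof.
move=> scS covS.
have /choice[U HU] := fun k => scattered_separating_nbhds (scS k).
pose F n := [set x | exists2 k, (k <= n)%N & layer (S k) (U k) n x].
apply: (@increasing_closed_discrete_Delta _ F).
- move=> n x [k kn Lx]; exists k; first exact: leqW.
  exact: layer_mono (leqnSn n) _ Lx.
- rewrite -subTset => x _; have [k _ Skx] : (\bigcup_k S k) x by rewrite covS.
  have [n Lx] := layer_exhaust (HU k).1 Skx.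
  exists (maxn k n) => //; exists k; first exact: leq_maxl.
  exact: layer_mono (leq_maxr k n) _ Lx.
- move=> n; apply: closed_discrete_bigcup_le => k.
  apply: (@separated_closed_discrete _ n.+1%:R^-1); first by rewrite invr_gt0 ltr0Sn.
  exact: layer_separated (HU k).2.
Qed.

End Metric.

Theorem proposition4p1 (T : topologicalType) :
  metrizable T -> sigma_scattered T -> Delta_space T.
Proof.
move=> [d [d0 dsym dtri dopen]] [S [scS covS]].
exact: (sigma_scattered_metric_Delta d0 dsym dtri dopen scS covS).
Qed.
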